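(* Let $d\mu(x)=e^{-V(x)}\,dx$ be a probability measure on $\mathbb R$ with $V$ smooth and even. Assume that $V$ is concave on $(R,+\infty)$ for some $R>0$ and that $V''(x)/V'(x)^2\to r$ as $x\to\infty$ for some $r>-1/2$. Then there exist $S>R$ and $C>0$ such that for all smooth $g$, $$\mathrm{Var}_\mu(g)\le C\int|g'(x)|^2\Big(1+\frac{\mathbf 1_{|x|>S}}{V'(x)^2}\Big)d\mu(x),\qquad \int|g-m|\,d\mu\le C\int|g'(x)|\Big(1+\frac{\mathbf 1_{|x|>S}}{|V'(x)|}\Big)d\mu(x),$$ where $m$ is a median of $g$ under $\mu$. *)

From Stdlib Require Import Reals Lra.
Open Scope R_scope.

Definition smooth (f : R -> R) : Prop :=
  exists D : nat -> R -> R,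
    (forall x, D O x = f x) /\
    (forall n x, derivable_pt_lim (D n) x (D (S n) x)).

Definition improper_int (f : R -> R) (l : R) : Prop :=
  exists pr : forall a b, Riemann_integrable f a b,
    forall eps, 0 < eps -> exists M, forall a b,
      a < - M -> M < b -> Rabs (RiemannInt (pr a b) - l) < eps.

(* mu(A) >= c for the measure d mu = exp(-V) dx and a closed set A,
   via outer regularity: every continuous phi with 1_A <= phi <= 1
   has integral >= c. *)
Definition measure_closed_ge (V : R -> R) (A : R -> Prop) (c : R) : Prop :=
  forall phi : R -> R,
    continuity phi ->
    (forall x, 0 <= phi x <= 1) ->
    (forall x, A x -> phi x = 1) ->
    forall l, improper_int (fun x => phi x * exp (- V x)) l -> c <= l.

Definition is_median (V g : R -> R) (m : R) : Prop :=
  measure_closed_ge V (fun x => m <= g x) (1/2) /\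
  measure_closed_ge V (fun x => g x <= m) (1/2).

Definition tail_weight (S : R) (w : R) (x : R) : R :=
  if Rlt_dec S (Rabs x) then / w else 0.

(* 1. Calculus prelude, limits at +-oo, improper integrals as total increments.
   2. Tail estimate (tail_estimate): if P is the distribution function of mu,
      mu([x,+oo)) and mu((-oo,x]) are at most K exp(-V x) scale(x), where
      scale(x) = 1/|V'(x)| for |x| > S and 1 otherwise.  In the tails this is
      a Mills-ratio bound (mills_tail_bound), using V' > 0 beyond R0 (forced
      by concavity and finite mass) and V''/V'^2 -> r; on [-S, S] it follows
      from the compactness of the interval.
   3. Hardy inequalities on half-lines, for h(0) = 0 and T the tail mass:
      int_0^b h^2 p <= 4 int_0^b h'^2 T^2 / p and int_0^b |h| p <= int_0^b |h'| T,
      with their mirror images on (-oo, 0].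
   4. Combining 2 and 3 bounds the second and first moments of g - g(0) by the
      weighted energies of the theorem (second_moment_bound, first_moment_bound).
      The variance is at most the second moment about g(0), and a median m is
      within 2 int |g - g(0)| dmu of g(0) by Markov's inequality, whence
      int |g - m| dmu <= 3 int |g - g(0)| dmu.  The theorem holds with
      C = 4 K^2 + 3 K. *)
From Stdlib Require Import Reals Lra Psatz FunctionalExtensionality Classical_Prop.
From Coquelicot Require Import Coquelicot.
Open Scope R_scope.

Lemma continuous_of_continuity_pt (f : R -> R) x :
  continuity_pt f x -> continuous f x.
Proof. intros H; now apply continuity_pt_filterlim. Qed.

Lemma continuity_of_derivable (F f : R -> R) :
  (forall x, derivable_pt_lim F x (f x)) -> forall x, continuity_pt F x.
Proof. intros H x. apply derivable_continuous_pt. exists (f x). apply H. Qed.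

Definition integrable_of_continuous (f : R -> R)
  (Hc : forall x, continuity_pt f x) (a b : R) : Riemann_integrable f a b :=
  ex_RInt_Reals_0 f a b
    (ex_RInt_continuous f a b (fun z _ => continuous_of_continuity_pt f z (Hc z))).

Lemma primitive_exists (f : R -> R) : (forall x, continuity_pt f x) ->
  exists F, forall x, derivable_pt_lim F x (f x).
Proof.
  intros Hc. exists (fun x => RInt f 0 x). intros x. apply is_derive_Reals.
  apply (is_derive_RInt f _ 0 x); [|now apply continuous_of_continuity_pt].
  apply filter_forall. intros y.
  apply (RInt_correct (V := R_CompleteNormedModule)), ex_RInt_continuous.
  intros z _. now apply continuous_of_continuity_pt.
Qed.

Lemma FTC (f F : R -> R) : (forall x, continuity_pt f x) ->
  (forall x, derivable_pt_lim F x (f x)) ->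
  forall a b (pr : Riemann_integrable f a b), RiemannInt pr = F b - F a.
Proof.
  intros Hc Hd a b pr. rewrite <- RInt_Reals. apply is_RInt_unique.
  apply (is_RInt_derive F f); intros x _.
  - now apply is_derive_Reals.
  - now apply continuous_of_continuity_pt.
Qed.

Lemma le_of_deriv_nonneg (F f : R -> R) a b : a <= b ->
  (forall c, a <= c <= b -> derivable_pt_lim F c (f c)) ->
  (forall c, a <= c <= b -> 0 <= f c) -> F a <= F b.
Proof.
  intros Hab Hd Hp. destruct (Req_dec a b) as [->|Hne]; [lra|].
  destruct (MVT_cor2 F f a b) as [c [Hc1 Hc2]]; [lra|auto|].
  assert (0 <= f c) by (apply Hp; lra). nra.
Qed.

Lemma const_of_deriv0 (F : R -> R) a b :
  (forall x, derivable_pt_lim F x 0) -> F a = F b.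
Proof.
  intros Hd.
  assert (Hmono : forall u v, u <= v -> F u <= F v /\ - F u <= - F v).
  { intros u v Huv. split.
    - apply (le_of_deriv_nonneg F (fun _ => 0)); auto; intros; lra.
    - apply (le_of_deriv_nonneg (fun y => - F y) (fun _ => 0)); auto; [|intros; lra].
      intros c _. replace 0 with (-0) by ring. now apply derivable_pt_lim_opp. }
  destruct (Rle_dec a b); [destruct (Hmono a b)|destruct (Hmono b a)]; lra.
Qed.

Lemma derivable_pt_lim_exp_opp (V : R -> R) x l : derivable_pt_lim V x l ->
  derivable_pt_lim (fun y => exp (- V y)) x (- l * exp (- V x)).
Proof.
  intros H.
  pose proof (derivable_pt_lim_comp (fun y => - V y) exp x (- l) (exp (- V x))
    (derivable_pt_lim_opp V x l H) (derivable_pt_lim_exp _)) as H2.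
  replace (- l * exp (- V x)) with (exp (- V x) * - l) by ring. exact H2.
Qed.

Lemma derivable_pt_lim_quot (f g : R -> R) x l1 l2 :
  derivable_pt_lim f x l1 -> derivable_pt_lim g x l2 -> g x <> 0 ->
  derivable_pt_lim (fun z => f z / g z) x ((l1 * g x - f x * l2) / g x ^ 2).
Proof.
  intros H1 H2 H3. replace (g x ^ 2) with (Rsqr (g x)) by (unfold Rsqr; ring).
  replace (f x * l2) with (l2 * f x) by ring. now apply (derivable_pt_lim_div f g x l1 l2).
Qed.

Lemma derivable_pt_lim_reflect (f : R -> R) x l : derivable_pt_lim f (- x) l ->
  derivable_pt_lim (fun y => f (- y)) x (- l).
Proof.
  intros H. replace (- l) with (l * -1) by ring.
  apply (derivable_pt_lim_comp (fun y => - y) f x (-1) l); [|exact H].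
  replace (-1) with (- (1)) by ring. apply derivable_pt_lim_opp, derivable_pt_lim_id.
Qed.

(* Derivative of y |-> - F (- y), the reflection of a primitive, which is
   again a primitive of the reflected integrand. *)
Lemma derivable_pt_lim_reflect_opp (F : R -> R) x l : derivable_pt_lim F (- x) l ->
  derivable_pt_lim (fun y => - F (- y)) x l.
Proof.
  intros H. replace l with (- - l) by ring.
  apply (derivable_pt_lim_opp (fun y => F (- y))), derivable_pt_lim_reflect, H.
Qed.

Lemma continuity_pt_reflect (f : R -> R) x : continuity_pt f (- x) ->
  continuity_pt (fun y => f (- y)) x.
Proof.
  intros H. apply (continuity_pt_comp (fun y => - y) f); [|exact H].
  apply continuity_pt_opp, derivable_continuous_pt, derivable_pt_id.
Qed.

Lemma deriv_parity (F F1 : R -> R) s : (forall x, derivable_pt_lim F x (F1 x)) ->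
  (forall x, F (- x) = s * F x) -> forall x, F1 (- x) = - s * F1 x.
Proof.
  intros Hd Hs x.
  assert (H1 := derivable_pt_lim_reflect F x _ (Hd (- x))).
  assert (E : (fun y => F (- y)) = (fun y => s * F y)) by (apply functional_extensionality; auto).
  rewrite E in H1. pose proof (uniqueness_limite _ _ _ _ H1 (derivable_pt_lim_scal F s x _ (Hd x))).
  lra.
Qed.

Lemma cmul (f g : R -> R) x : continuity_pt f x -> continuity_pt g x ->
  continuity_pt (fun y => f y * g y) x.
Proof. intros; now apply (continuity_pt_mult f g). Qed.
Lemma cplus (f g : R -> R) x : continuity_pt f x -> continuity_pt g x ->
  continuity_pt (fun y => f y + g y) x.
Proof. intros; now apply (continuity_pt_plus f g). Qed.
Lemma cminus (f g : R -> R) x : continuity_pt f x -> continuity_pt g x ->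
  continuity_pt (fun y => f y - g y) x.
Proof. intros; now apply (continuity_pt_minus f g). Qed.
Lemma copp (f : R -> R) x : continuity_pt f x -> continuity_pt (fun y => - f y) x.
Proof. intros; now apply (continuity_pt_opp f). Qed.
Lemma cconst (c : R) x : continuity_pt (fun _ => c) x.
Proof. apply continuity_pt_const. intros a b; auto. Qed.
Lemma cdiv (f g : R -> R) x : continuity_pt f x -> continuity_pt g x -> g x <> 0 ->
  continuity_pt (fun y => f y / g y) x.
Proof. intros; now apply (continuity_pt_div f g). Qed.
Lemma cabs (f : R -> R) x : continuity_pt f x -> continuity_pt (fun y => Rabs (f y)) x.
Proof. intros H. apply (continuity_pt_comp f Rabs); auto. apply Rcontinuity_abs. Qed.
Lemma cpow2 (f : R -> R) x : continuity_pt f x -> continuity_pt (fun y => f y ^ 2) x.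
Proof.
  intros H. replace (fun y => f y ^ 2) with (fun y => f y * f y)
    by (apply functional_extensionality; intro; ring). now apply cmul.
Qed.

Ltac cont := repeat first [ assumption
  | match goal with H : forall _, continuity_pt _ _ |- _ => apply H end
  | apply cconst | apply cmul | apply cplus | apply cminus | apply copp
  | apply cabs | apply cpow2 ].

Definition lim_pinf (F : R -> R) (L : R) : Prop :=
  forall eps, 0 < eps -> exists M, forall x, M < x -> Rabs (F x - L) < eps.
Definition lim_minf (F : R -> R) (L : R) : Prop := lim_pinf (fun y => F (- y)) L.

Lemma le_of_le_eps x y : (forall eps, 0 < eps -> x <= y + eps) -> x <= y.
Proof.
  intros H. destruct (Rle_dec x y); auto. specialize (H ((x - y)/2) ltac:(lra)). lra.
Qed.

Lemma lim_pinf_beyond F L : lim_pinf F L ->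
  forall eps x0, 0 < eps -> exists x, x0 <= x /\ L - eps < F x < L + eps.
Proof.
  intros H eps x0 He. destruct (H eps He) as [M HM].
  exists (Rmax x0 (M + 1)). pose proof (Rmax_l x0 (M + 1)). pose proof (Rmax_r x0 (M + 1)).
  specialize (HM (Rmax x0 (M + 1)) ltac:(lra)). apply Rabs_def2 in HM. split; lra.
Qed.

Lemma lim_pinf_ext F G L : (forall x, F x = G x) -> lim_pinf F L -> lim_pinf G L.
Proof. intros E H eps He. destruct (H eps He) as [M HM]. exists M. intros. rewrite <- E. auto. Qed.

Lemma lim_pinf_const c : lim_pinf (fun _ => c) c.
Proof. intros eps He. exists 0. intros. rewrite Rminus_diag, Rabs_R0. auto. Qed.

Lemma lim_pinf_lin F G a b c : lim_pinf F a -> lim_pinf G b ->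
  lim_pinf (fun x => F x + c * G x) (a + c * b).
Proof.
  intros H1 H2 eps He.
  set (e := eps / (2 * (Rabs c + 1))).
  assert (He' : 0 < e) by (unfold e; pose proof (Rabs_pos c); apply Rdiv_lt_0_compat; lra).
  destruct (H1 (eps / 2)) as [M1 HM1]; [lra|]. destruct (H2 e He') as [M2 HM2].
  exists (Rmax M1 M2). intros x Hx. pose proof (Rmax_l M1 M2). pose proof (Rmax_r M1 M2).
  specialize (HM1 x ltac:(lra)). specialize (HM2 x ltac:(lra)).
  assert (Hc : Rabs c * Rabs (G x - b) <= eps / 2).
  { assert (E : eps / 2 = (Rabs c + 1) * e) by (unfold e; field; pose proof (Rabs_pos c); lra).
    pose proof (Rabs_pos c). pose proof (Rabs_pos (G x - b)). nra. }
  replace (F x + c * G x - (a + c * b)) with ((F x - a) + c * (G x - b)) by ring.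
  eapply Rle_lt_trans; [apply Rabs_triang|]. rewrite Rabs_mult. lra.
Qed.

Lemma lim_minf_lin F G a b c : lim_minf F a -> lim_minf G b ->
  lim_minf (fun x => F x + c * G x) (a + c * b).
Proof. apply lim_pinf_lin. Qed.

Lemma lim_minf_reflect F L : lim_minf F L -> lim_pinf (fun y => - F (- y)) (- L).
Proof.
  intros H. apply (lim_pinf_ext (fun y => 0 + -1 * F (- y))); [intros; ring|].
  replace (- L) with (0 + -1 * L) by ring. apply lim_pinf_lin; auto. apply lim_pinf_const.
Qed.

Lemma nondecreasing_between_limits H a b : (forall u v, u <= v -> H u <= H v) ->
  lim_minf H a -> lim_pinf H b -> forall x, a <= H x <= b.
Proof.
  intros Hm Ha Hb x. split; apply le_of_le_eps; intros eps He.
  - destruct (lim_pinf_beyond _ _ Ha eps (- x) He) as [y [Hy Hy']].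
    specialize (Hm (- y) x ltac:(lra)). lra.
  - destruct (lim_pinf_beyond _ _ Hb eps x He) as [y [Hy Hy']].
    specialize (Hm x y Hy). lra.
Qed.

Lemma nondecreasing_lim_pinf (F : R -> R) B : (forall a b, a <= b -> F a <= F b) ->
  (forall x, F x <= B) -> exists L, lim_pinf F L.
Proof.
  intros Hm HB.
  destruct (completeness (fun y => exists x, y = F x)) as [L [HL1 HL2]].
  { exists B. intros y [x ->]. auto. }
  { exists (F 0), 0. auto. }
  assert (Hub : forall x, F x <= L) by (intros x; apply HL1; now exists x).
  exists L. intros eps He.
  destruct (classic (exists x0, L - eps < F x0)) as [[x0 Hx0]|Hno].
  - exists x0. intros x Hx. specialize (Hm x0 x ltac:(lra)). specialize (Hub x).
    apply Rabs_def1; lra.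
  - exfalso. assert (L <= L - eps); [|lra]. apply HL2. intros y [x ->].
    apply Rnot_lt_le. intros Hlt. apply Hno. now exists x.
Qed.

Lemma monotone_limits (F : R -> R) B : (forall a b, a <= b -> F a <= F b) ->
  (forall a b, a <= b -> F b - F a <= B) ->
  exists Lm Lp, lim_minf F Lm /\ lim_pinf F Lp /\ (forall x, Lm <= F x <= Lp) /\ Lp - Lm <= B.
Proof.
  intros Hm Hb.
  assert (HB0 : 0 <= B) by (specialize (Hb 0 0); lra).
  destruct (nondecreasing_lim_pinf F (F 0 + B) Hm) as [Lp HLp].
  { intros x. destruct (Rle_dec 0 x); [specialize (Hb 0 x r)|specialize (Hm x 0 ltac:(lra))]; lra. }
  destruct (nondecreasing_lim_pinf (fun y => - F (- y)) (B - F 0)) as [L' HL'].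
  { intros a b Hab. specialize (Hm (- b) (- a) ltac:(lra)). lra. }
  { intros y. destruct (Rle_dec 0 y);
      [specialize (Hb (- y) 0 ltac:(lra))|specialize (Hm 0 (- y) ltac:(lra))]; lra. }
  assert (HLm : lim_minf F (- L')).
  { apply (lim_pinf_ext (fun y => 0 + -1 * - F (- y))); [intros; ring|].
    replace (- L') with (0 + -1 * L') by ring. apply lim_pinf_lin; auto. apply lim_pinf_const. }
  exists (- L'), Lp. split; [exact HLm|]. split; [exact HLp|]. split.
  - now apply nondecreasing_between_limits.
  - apply le_of_le_eps. intros eps He.
    destruct (lim_pinf_beyond _ _ HLp (eps / 2) 0 ltac:(lra)) as [b [Hb0 Hb1]].
    destruct (lim_pinf_beyond _ _ HLm (eps / 2) 0 ltac:(lra)) as [y [Hy0 Hy1]].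
    specialize (Hb (- y) b ltac:(lra)). lra.
Qed.

Lemma improper_of_primitive (f Q : R -> R) Lm Lp : (forall x, continuity_pt f x) ->
  (forall x, derivable_pt_lim Q x (f x)) -> lim_minf Q Lm -> lim_pinf Q Lp ->
  improper_int f (Lp - Lm).
Proof.
  intros Hc Hd H1 H2. exists (integrable_of_continuous f Hc). intros eps He.
  destruct (H1 (eps/2)) as [M1 HM1]; [lra|]. destruct (H2 (eps/2)) as [M2 HM2]; [lra|].
  exists (Rmax M1 M2). intros a b Ha Hb. pose proof (Rmax_l M1 M2). pose proof (Rmax_r M1 M2).
  rewrite (FTC f Q Hc Hd). specialize (HM2 b ltac:(lra)). specialize (HM1 (- a) ltac:(lra)).
  rewrite Ropp_involutive in HM1.
  apply Rabs_def2 in HM1; apply Rabs_def2 in HM2. apply Rabs_def1; lra.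
Qed.

Lemma improper_unique (f Q : R -> R) Lm Lp l : (forall x, continuity_pt f x) ->
  (forall x, derivable_pt_lim Q x (f x)) -> lim_minf Q Lm -> lim_pinf Q Lp ->
  improper_int f l -> l = Lp - Lm.
Proof.
  intros Hc Hd H1 H2 [pr H3].
  assert (Hle : forall eps, 0 < eps -> Rabs (l - (Lp - Lm)) <= eps).
  { intros eps He.
    destruct (H1 (eps/3)) as [M1 HM1]; [lra|]. destruct (H2 (eps/3)) as [M2 HM2]; [lra|].
    destruct (H3 (eps/3)) as [M3 HM3]; [lra|].
    set (M := Rmax (Rmax M1 M2) M3).
    assert (M1 <= M /\ M2 <= M /\ M3 <= M) as [? [? ?]].
    { unfold M. pose proof (Rmax_l (Rmax M1 M2) M3). pose proof (Rmax_r (Rmax M1 M2) M3).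
      pose proof (Rmax_l M1 M2). pose proof (Rmax_r M1 M2). lra. }
    specialize (HM3 (- M - 1) (M + 1) ltac:(lra) ltac:(lra)). rewrite (FTC f Q Hc Hd) in HM3.
    specialize (HM2 (M+1) ltac:(lra)). specialize (HM1 (M+1) ltac:(lra)).
    replace (- (M + 1)) with (- M - 1) in HM1 by ring.
    apply Rabs_def2 in HM1; apply Rabs_def2 in HM2; apply Rabs_def2 in HM3.
    apply Rabs_le; lra. }
  destruct (Req_dec l (Lp - Lm)); auto. exfalso.
  assert (0 < Rabs (l - (Lp - Lm))) by (apply Rabs_pos_lt; lra).
  specialize (Hle (Rabs (l - (Lp - Lm)) / 2) ltac:(lra)). lra.
Qed.

Lemma partial_le_improper (W : R -> R) I : improper_int W I -> (forall x, 0 <= W x) ->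
  forall a b (pr : Riemann_integrable W a b), a <= b -> RiemannInt pr <= I.
Proof.
  intros [pr0 H] Hnn a b pr Hab. apply le_of_le_eps. intros eps He.
  destruct (H eps He) as [M HM].
  set (a' := Rmin a (-M-1)). set (b' := Rmax b (M+1)).
  assert (a' <= a /\ a' < -M /\ b <= b' /\ M < b') as [? [? [? ?]]].
  { unfold a', b'. pose proof (Rmin_l a (-M-1)). pose proof (Rmin_r a (-M-1)).
    pose proof (Rmax_l b (M+1)). pose proof (Rmax_r b (M+1)). lra. }
  specialize (HM a' b' ltac:(lra) ltac:(lra)). apply Rabs_def2 in HM.
  assert (Hz : forall u v (q : Riemann_integrable W u v), u <= v -> 0 <= RiemannInt q).
  { intros u v q Huv. cut (0 * (v - u) <= RiemannInt q); [lra|].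
    rewrite <- (RiemannInt_P15 (RiemannInt_P14 u v 0)).
    apply RiemannInt_P19; auto; intros; unfold fct_cte; auto. }
  pose proof (RiemannInt_P26 (pr0 a' a) pr (pr0 a' b)).
  pose proof (RiemannInt_P26 (pr0 a' b) (pr0 b b') (pr0 a' b')).
  pose proof (Hz _ _ (pr0 a' a) ltac:(lra)). pose proof (Hz _ _ (pr0 b b') ltac:(lra)). lra.
Qed.

Lemma improper_nonneg (W : R -> R) I : improper_int W I -> (forall x, 0 <= W x) -> 0 <= I.
Proof.
  intros HI Hnn. destruct HI as [pr H0].
  pose proof (partial_le_improper W I (ex_intro _ pr H0) Hnn 0 0 (pr 0 0) ltac:(lra)) as H.
  now rewrite RiemannInt_P9 in H.
Qed.

Lemma primitive_limits_le (f g F G : R -> R) Lmf Lpf Lmg Lpg :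
  (forall x, derivable_pt_lim F x (f x)) -> (forall x, derivable_pt_lim G x (g x)) ->
  (forall x, f x <= g x) -> lim_minf F Lmf -> lim_pinf F Lpf -> lim_minf G Lmg -> lim_pinf G Lpg ->
  Lpf - Lmf <= Lpg - Lmg.
Proof.
  intros Hf Hg Hle H1 H2 H3 H4.
  assert (Hmono : forall u v, u <= v -> G u + -1 * F u <= G v + -1 * F v).
  { intros u v Huv.
    apply (le_of_deriv_nonneg (fun x => G x + -1 * F x) (fun x => g x + -1 * f x)); auto.
    - intros c _. apply derivable_pt_lim_plus; auto. now apply derivable_pt_lim_scal.
    - intros c _. specialize (Hle c). lra. }
  destruct (nondecreasing_between_limits _ _ _ Hmono
              (lim_minf_lin G F Lmg Lmf (-1) H3 H1) (lim_pinf_lin G F Lpg Lpf (-1) H4 H2) 0).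
  lra.
Qed.

Lemma dominated_limits (f g Q G : R -> R) B :
  (forall x, derivable_pt_lim Q x (f x)) -> (forall x, derivable_pt_lim G x (g x)) ->
  (forall x, Rabs (f x) <= g x) -> (forall a b, a <= b -> G b - G a <= B) ->
  exists Lm Lp, lim_minf Q Lm /\ lim_pinf Q Lp.
Proof.
  intros HQ HG Hfg HB.
  assert (Hf : forall x, - g x <= f x <= g x)
    by (intro x; specialize (Hfg x); pose proof (Rle_abs (f x)); pose proof (Rle_abs (- f x));
        rewrite Rabs_Ropp in *; lra).
  assert (HGm : forall a b, a <= b -> G a <= G b).
  { intros a b Hab. apply (le_of_deriv_nonneg G g); auto. intros c _. specialize (Hf c). lra. }
  destruct (monotone_limits G B HGm HB) as [Gm [Gp [HGm' [HGp _]]]].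
  destruct (monotone_limits (fun x => Q x + 1 * G x) (2 * B)) as [Fm [Fp [HFm [HFp _]]]].
  { intros a b Hab. apply (le_of_deriv_nonneg (fun x => Q x + 1 * G x) (fun x => f x + 1 * g x)); auto.
    - intros; apply derivable_pt_lim_plus; auto. now apply derivable_pt_lim_scal.
    - intros c _. specialize (Hf c). lra. }
  { intros a b Hab. specialize (HB a b Hab).
    assert (2 * G a - (Q a + 1 * G a) <= 2 * G b - (Q b + 1 * G b)); [|lra].
    apply (le_of_deriv_nonneg (fun x => 2 * G x - (Q x + 1 * G x))
             (fun x => 2 * g x - (f x + 1 * g x))); auto.
    - intros; apply derivable_pt_lim_minus; [apply derivable_pt_lim_scal; auto|].
      apply derivable_pt_lim_plus; auto. now apply derivable_pt_lim_scal.
    - intros c _. specialize (Hf c). lra. }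
  exists (Fm + -1 * Gm), (Fp + -1 * Gp). split.
  - apply (lim_pinf_ext (fun y => (Q (- y) + 1 * G (- y)) + -1 * G (- y))); [intro; ring|].
    exact (lim_minf_lin (fun x => Q x + 1 * G x) G Fm Gm (-1) HFm HGm').
  - apply (lim_pinf_ext (fun x => (Q x + 1 * G x) + -1 * G x)); [intro; ring|].
    now apply lim_pinf_lin.
Qed.

Lemma increment_le_improper (f Q : R -> R) l : (forall x, continuity_pt f x) ->
  (forall x, 0 <= f x) -> (forall x, derivable_pt_lim Q x (f x)) -> improper_int f l ->
  forall a b, a <= b -> Q b - Q a <= l.
Proof.
  intros Hc Hnn Hd Hi a b Hab. rewrite <- (FTC f Q Hc Hd a b (integrable_of_continuous f Hc a b)).
  now apply (partial_le_improper f l Hi Hnn).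
Qed.

Lemma increments_across_zero (F : R -> R) B : (forall a b, a <= b -> F a <= F b) ->
  (forall a b, a <= 0 -> 0 <= b -> F b - F a <= B) -> forall a b, a <= b -> F b - F a <= B.
Proof.
  intros Hm Hb a b Hab. specialize (Hb (Rmin a 0) (Rmax b 0) (Rmin_r a 0) (Rmax_r b 0)).
  pose proof (Hm (Rmin a 0) a (Rmin_l a 0)). pose proof (Hm b (Rmax b 0) (Rmax_l b 0)). lra.
Qed.

Lemma distribution_function (V V1 : R -> R) :
  (forall x, derivable_pt_lim V x (V1 x)) -> improper_int (fun x => exp (- V x)) 1 ->
  exists P Lm Lp, (forall x, derivable_pt_lim P x (exp (- V x))) /\
    lim_minf P Lm /\ lim_pinf P Lp /\ (forall x, Lm <= P x <= Lp) /\ Lp - Lm = 1.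
Proof.
  intros hV1 hprob.
  assert (Hc : forall x, continuity_pt (fun y => exp (- V y)) x).
  { apply (continuity_of_derivable _ (fun x => - V1 x * exp (- V x))).
    intros x; now apply derivable_pt_lim_exp_opp. }
  assert (Hpos : forall x, 0 <= exp (- V x)) by (intros; apply Rlt_le, exp_pos).
  destruct (primitive_exists _ Hc) as [P HP].
  assert (Hmon : forall a b, a <= b -> P a <= P b)
    by (intros; now apply (le_of_deriv_nonneg P (fun y => exp (- V y)))).
  destruct (monotone_limits P 1 Hmon (increment_le_improper _ P 1 Hc Hpos HP hprob))
    as [Lm [Lp [HLm [HLp [Hb _]]]]].
  exists P, Lm, Lp. do 4 (split; [auto|]).
  symmetry. now apply (improper_unique (fun y => exp (- V y)) P).
Qed.

(* Increments of a primitive of f are controlled by partial integrals of any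
   (possibly discontinuous) integrable W with f <= c W. *)
Lemma increment_le_integral (f W Q : R -> R) c a b (prW : Riemann_integrable W a b) :
  (forall x, continuity_pt f x) -> (forall x, derivable_pt_lim Q x (f x)) -> 0 < c ->
  (forall x, a <= x <= b -> f x <= c * W x) -> a <= b -> Q b - Q a <= c * RiemannInt prW.
Proof.
  intros Hc Hd Hc0 Hle Hab.
  assert (Hc' : forall x, continuity_pt (fun y => / c * f y) x) by (intro; cont).
  assert (Hd' : forall x, derivable_pt_lim (fun y => / c * Q y) x (/ c * f x))
    by (intro; now apply derivable_pt_lim_scal).
  pose proof (FTC _ _ Hc' Hd' a b (integrable_of_continuous _ Hc' a b)) as E.
  assert (RiemannInt (integrable_of_continuous _ Hc' a b) <= RiemannInt prW).
  { apply RiemannInt_P19; auto. intros x Hx. specialize (Hle x ltac:(lra)).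
    apply (Rmult_le_reg_l c); auto. rewrite <- Rmult_assoc, Rinv_r by lra. lra. }
  replace (Q b - Q a) with (c * (/ c * Q b - / c * Q a)) by (field; lra).
  apply Rmult_le_compat_l; lra.
Qed.

Lemma concave_slope (V V1 : R -> R) R0 :
  (forall x, derivable_pt_lim V x (V1 x)) ->
  (forall x y t, R0 < x -> R0 < y -> 0 <= t <= 1 ->
      t * V x + (1 - t) * V y <= V (t * x + (1 - t) * y)) ->
  forall x y, R0 < x < y -> V y - V x <= V1 x * (y - x).
Proof.
  intros Hd Hc x y [Hx Hxy].
  destruct (Rle_dec (V y - V x) (V1 x * (y - x))) as [|Hn]; auto. exfalso.
  set (sl := (V y - V x) / (y - x)).
  assert (Hsl : V1 x < sl).
  { unfold sl. apply (Rmult_lt_reg_r (y - x)); [lra|]. unfold Rdiv.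
    rewrite Rmult_assoc, Rinv_l by lra. lra. }
  destruct (Hd x (sl - V1 x) ltac:(lra)) as [[del Hdel] Hdd]. simpl in Hdd.
  set (s := Rmin (del/2) (y - x)).
  assert (0 < s /\ s <= y - x /\ s < del) as [Hs1 [Hs2 Hs3]].
  { unfold s, Rmin. destruct (Rle_dec (del/2) (y-x)); lra. }
  specialize (Hdd s ltac:(lra) ltac:(rewrite Rabs_right; lra)).
  set (t := s / (y - x)).
  assert (Ht : 0 <= t <= 1).
  { unfold t. split; [apply Rlt_le, Rdiv_lt_0_compat; lra|].
    apply (Rmult_le_reg_r (y - x)); [lra|]. unfold Rdiv. rewrite Rmult_assoc, Rinv_l by lra. lra. }
  specialize (Hc y x t ltac:(lra) Hx Ht).
  replace (t * y + (1 - t) * x) with (x + s) in Hc by (unfold t; field; lra).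
  assert (V (x + s) - V x >= s * sl).
  { replace (s * sl) with (t * (V y - V x)) by (unfold t, sl; field; lra). lra. }
  apply Rabs_def2 in Hdd. destruct Hdd as [Hdd _].
  assert ((V (x + s) - V x) / s >= sl).
  { apply Rle_ge. apply (Rmult_le_reg_r s); auto. unfold Rdiv. rewrite Rmult_assoc, Rinv_l by lra. lra. }
  lra.
Qed.

(* Mills-ratio bound: where V' > 0 and 1 <= a (1 + V''/V'^2), the mass of
   [x, +oo) under exp(-V) is at most a exp(-V x) / V'(x), since
   (a exp(-V)/V')' = - a (1 + V''/V'^2) exp(-V) <= - exp(-V). *)
Lemma mills_tail_bound (V V1 V2 Q : R -> R) L S a :
  (forall x, derivable_pt_lim V x (V1 x)) -> (forall x, derivable_pt_lim V1 x (V2 x)) ->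
  (forall x, derivable_pt_lim Q x (exp (- V x))) -> lim_pinf Q L ->
  (forall x, S <= x -> 0 < V1 x /\ 1 <= a * (1 + V2 x / V1 x ^ 2)) -> 0 < a ->
  forall x, S <= x -> L - Q x <= a * (exp (- V x) / V1 x).
Proof.
  intros hV1 hV2 HQ HL Hreg Ha x Hx.
  set (p := fun z => exp (- V z)).
  set (Phi := fun z => - (a * (p z / V1 z) + Q z)).
  assert (HPhi : forall y, x <= y -> Phi x <= Phi y).
  { intros y Hy. apply (le_of_deriv_nonneg Phi
      (fun z => - (a * ((- V1 z * p z * V1 z - p z * V2 z) / V1 z ^ 2) + p z))); auto.
    - intros c Hc. destruct (Hreg c ltac:(lra)) as [Hv _].
      apply derivable_pt_lim_opp, derivable_pt_lim_plus; auto.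
      apply derivable_pt_lim_scal, derivable_pt_lim_quot; auto; [|lra].
      now apply derivable_pt_lim_exp_opp.
    - intros c Hc. destruct (Hreg c ltac:(lra)) as [Hv Hk]. pose proof (exp_pos (- V c)).
      replace (- (a * ((- V1 c * p c * V1 c - p c * V2 c) / V1 c ^ 2) + p c))
        with (p c * (a * (1 + V2 c / V1 c ^ 2) - 1)) by (unfold p; field; lra).
      apply Rmult_le_pos; unfold p; lra. }
  apply le_of_le_eps. intros eps He.
  destruct (lim_pinf_beyond Q L HL eps x He) as [y [Hy HQy]].
  specialize (HPhi y Hy). destruct (Hreg y ltac:(lra)) as [Hvy _].
  assert (0 <= a * (p y / V1 y))
    by (apply Rmult_le_pos; [lra|]; apply Rlt_le, Rdiv_lt_0_compat; auto; apply exp_pos).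
  unfold Phi, p in *. lra.
Qed.

Definition scale (S : R) (V1 : R -> R) (x : R) : R :=
  if Rlt_dec S (Rabs x) then / Rabs (V1 x) else 1.

Lemma scale_cases S V1 x :
  (S < Rabs x /\ scale S V1 x = / Rabs (V1 x)) \/ (Rabs x <= S /\ scale S V1 x = 1).
Proof. unfold scale. destruct (Rlt_dec S (Rabs x)); [left|right]; split; auto; lra. Qed.

Section Tails.

Variables (V V1 V2 : R -> R) (R0 r : R).
Hypothesis hV1 : forall x, derivable_pt_lim V x (V1 x).
Hypothesis hV2 : forall x, derivable_pt_lim V1 x (V2 x).
Hypothesis heven : forall x, V (- x) = V x.
Hypothesis hR0 : 0 < R0.
Hypothesis hconc : forall x y t, R0 < x -> R0 < y -> 0 <= t <= 1 ->
  t * V x + (1 - t) * V y <= V (t * x + (1 - t) * y).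
Hypothesis hr : - / 2 < r.
Hypothesis hlim : forall eps, 0 < eps -> exists M, forall x, M < x ->
  Rabs (V2 x / (V1 x) ^ 2 - r) < eps.

Variables (P : R -> R) (Lm Lp : R).
Hypothesis HP : forall x, derivable_pt_lim P x (exp (- V x)).
Hypothesis HLm : lim_minf P Lm.
Hypothesis HLp : lim_pinf P Lp.
Hypothesis HPb : forall x, Lm <= P x <= Lp.
Hypothesis Hmass : Lp - Lm = 1.

Lemma V1_odd x : V1 (- x) = - V1 x.
Proof. rewrite (deriv_parity V V1 1 hV1); [ring|]. intro; rewrite heven; ring. Qed.

(* Beyond R0 the potential increases: otherwise, by concavity, V would stay
   below V(x0) on [x0, +oo) and mu would give mass > 1 to [x0, x0 + 2 exp(V x0)]. *)
Lemma V1_pos x0 : R0 < x0 -> 0 < V1 x0.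
Proof.
  intros Hx0. destruct (Rlt_dec 0 (V1 x0)) as [|Hn]; auto. exfalso.
  set (p0 := exp (- V x0)). assert (Hp0 : 0 < p0) by apply exp_pos.
  assert (Hge : forall y, x0 <= y -> p0 <= exp (- V y)).
  { intros y Hy. unfold p0. destruct (Req_dec y x0) as [->|Hne]; [lra|].
    pose proof (concave_slope V V1 R0 hV1 hconc x0 y ltac:(lra)).
    assert (V y <= V x0) by nra.
    destruct (Req_dec (V y) (V x0)) as [->|]; [lra|]. apply Rlt_le, exp_increasing. lra. }
  set (y := x0 + 2 / p0).
  assert (Hy : x0 <= y) by (unfold y; assert (0 < 2 / p0) by (apply Rdiv_lt_0_compat; lra); lra).
  assert (HH : P x0 - p0 * x0 <= P y - p0 * y).
  { apply (le_of_deriv_nonneg (fun z => P z - p0 * z) (fun z => exp (- V z) - p0 * 1) x0 y Hy).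
    - intros c _. apply derivable_pt_lim_minus; auto. apply derivable_pt_lim_scal, derivable_pt_lim_id.
    - intros c Hc. specialize (Hge c ltac:(lra)). lra. }
  assert (p0 * (y - x0) = 2) by (unfold y; field; lra).
  destruct (HPb x0), (HPb y). lra.
Qed.

(* Since V''/V'^2 -> r > -1/2, eventually 1 <= a (1 + V''/V'^2) with a = 2/(1+r). *)
Lemma tail_regime : exists a S, 0 < a /\ R0 < S /\
  forall x, S <= x -> 0 < V1 x /\ 1 <= a * (1 + V2 x / V1 x ^ 2).
Proof.
  assert (Hr1 : 0 < 1 + r) by lra.
  destruct (hlim ((1 + r) / 2) ltac:(lra)) as [M HM].
  exists (2 / (1 + r)), (Rmax (R0 + 1) (M + 1)).
  pose proof (Rmax_l (R0 + 1) (M + 1)). pose proof (Rmax_r (R0 + 1) (M + 1)).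
  split; [apply Rdiv_lt_0_compat; lra|]. split; [lra|].
  intros x Hx. split; [apply V1_pos; lra|].
  specialize (HM x ltac:(lra)). apply Rabs_def2 in HM.
  set (q := V2 x / V1 x ^ 2) in *.
  apply (Rmult_le_reg_l ((1 + r) / 2)); [lra|].
  replace ((1 + r) / 2 * (2 / (1 + r) * (1 + q))) with (1 + q) by (field; lra). lra.
Qed.

(* Mills-ratio bounds for both tails; the left one follows by applying the
   right one to the reflected distribution function y |-> - P (- y). *)
Lemma tail_bounds : exists a S, 0 < a /\ R0 < S /\ forall x, S <= x ->
  0 < V1 x /\ Lp - P x <= a * (exp (- V x) / V1 x) /\ P (- x) - Lm <= a * (exp (- V x) / V1 x).
Proof.
  destruct tail_regime as [a [S [Ha [HS Hreg]]]].
  exists a, S. split; [auto|]. split; [auto|]. intros x Hx.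
  split; [apply Hreg; auto|]. split.
  - now apply (mills_tail_bound V V1 V2 P Lp S a).
  - assert (HQ : forall y, derivable_pt_lim (fun z => - P (- z)) y (exp (- V y))).
    { intros y. rewrite <- heven. apply derivable_pt_lim_reflect_opp, HP. }
    pose proof (mills_tail_bound V V1 V2 _ (- Lm) S a hV1 hV2 HQ
      (lim_minf_reflect P Lm HLm) Hreg Ha x Hx). lra.
Qed.

Lemma tail_estimate : exists S K, R0 < S /\ 0 < K /\
  (forall x, S < Rabs x -> V1 x <> 0) /\
  (forall x, 0 <= x -> Lp - P x <= K * exp (- V x) * scale S V1 x) /\
  (forall x, x <= 0 -> P x - Lm <= K * exp (- V x) * scale S V1 x).
Proof.
  destruct tail_bounds as [a [S [Ha [HS Htail]]]].
  assert (HVc := continuity_of_derivable V V1 hV1).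
  destruct (continuity_ab_maj V (- S) S ltac:(lra) (fun c _ => HVc c)) as [xm [Hxm _]].
  set (pmin := exp (- V xm)). assert (Hpm : 0 < pmin) by apply exp_pos.
  assert (Hpmin : forall x, Rabs x <= S -> 1 <= / pmin * exp (- V x)).
  { intros x Hx. apply Rabs_le_between in Hx. specialize (Hxm x Hx).
    replace 1 with (/ pmin * pmin) by (field; lra).
    apply Rmult_le_compat_l; [apply Rlt_le, Rinv_0_lt_compat; lra|].
    unfold pmin. destruct (Req_dec (V x) (V xm)) as [->|]; [lra|]. apply Rlt_le, exp_increasing. lra. }
  set (K := Rmax a (/ pmin)).
  assert (Ha' : a <= K) by apply Rmax_l. assert (Hp' : / pmin <= K) by apply Rmax_r.
  assert (Hcompact : forall x t, Rabs x <= S -> t <= 1 -> t <= K * exp (- V x) * 1).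
  { intros x t Hx Ht. specialize (Hpmin x Hx). pose proof (exp_pos (- V x)). nra. }
  assert (Htail' : forall x t, S <= x -> t <= a * (exp (- V x) / V1 x) ->
            t <= K * exp (- V x) * / Rabs (V1 x)).
  { intros x t Hx Ht. destruct (Htail x Hx) as [Hv _]. rewrite Rabs_right by lra.
    assert (0 <= exp (- V x) * / V1 x)
      by (apply Rmult_le_pos; [apply Rlt_le, exp_pos|apply Rlt_le, Rinv_0_lt_compat, Hv]).
    unfold Rdiv in Ht. rewrite Rmult_assoc. nra. }
  exists S, K. split; [auto|]. split; [pose proof (Rinv_0_lt_compat _ Hpm); lra|]. split; [|split].
  - intros x Hx. destruct (Rle_dec 0 x).
    + rewrite Rabs_right in Hx by lra. destruct (Htail x ltac:(lra)). lra.
    + rewrite Rabs_left in Hx by lra. rewrite <- (Ropp_involutive x), V1_odd.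
      destruct (Htail (- x) ltac:(lra)). lra.
  - intros x Hx. destruct (scale_cases S V1 x) as [[Hs ->]|[Hs ->]].
    + rewrite Rabs_right in Hs by lra. apply Htail'; [lra|]. apply Htail; lra.
    + apply Hcompact; auto. destruct (HPb x). lra.
  - intros x Hx. destruct (scale_cases S V1 x) as [[Hs ->]|[Hs ->]].
    + rewrite Rabs_left1 in Hs by lra.
      replace (P x) with (P (- - x)) by (now rewrite Ropp_involutive).
      rewrite <- (heven x), <- Rabs_Ropp, <- V1_odd. apply Htail'; [lra|]. apply Htail; lra.
    + apply Hcompact; auto. destruct (HPb x). lra.
Qed.

End Tails.

Lemma abs_increment_le (h g1 A : R -> R) :
  (forall x, derivable_pt_lim h x (g1 x)) -> (forall x, derivable_pt_lim A x (Rabs (g1 x))) ->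
  forall a b, a <= b -> Rabs (h b - h a) <= A b - A a.
Proof.
  intros Hh HA a b Hab.
  assert (H1 : A a - h a <= A b - h b).
  { apply (le_of_deriv_nonneg (fun y => A y - h y) (fun y => Rabs (g1 y) - g1 y)); auto.
    - intros; now apply derivable_pt_lim_minus.
    - intros c _. pose proof (Rle_abs (g1 c)); lra. }
  assert (H2 : A a + h a <= A b + h b).
  { apply (le_of_deriv_nonneg (fun y => A y + h y) (fun y => Rabs (g1 y) + g1 y)); auto.
    - intros; now apply derivable_pt_lim_plus.
    - intros c _. pose proof (Rle_abs (- g1 c)); rewrite Rabs_Ropp in *; lra. }
  apply Rabs_le; lra.
Qed.

(* 2 h g1 T <= h^2 p / 2 + 2 g1^2 T^2 / p: absorbs the cross term below. *)
Lemma am_gm_weighted h g1 T p : 0 < p ->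
  2 * h * g1 * T <= / 2 * (h * h * p) + 2 * (g1 * g1 * (T * T / p)).
Proof.
  intros Hp. set (u := g1 * T / p).
  replace (g1 * g1 * (T * T / p)) with (u * u * p) by (unfold u; field; lra).
  replace (2 * h * g1 * T) with (2 * h * u * p) by (unfold u; field; lra).
  assert (0 <= (h - 2 * u) * (h - 2 * u) * p) by (apply Rmult_le_pos; [apply Rle_0_sqr|lra]). nra.
Qed.

Section HalfLine.

Variables (h g1 p T : R -> R).
Hypothesis Hh : forall x, derivable_pt_lim h x (g1 x).
Hypothesis HT : forall x, derivable_pt_lim T x (- p x).
Hypothesis Hg1c : forall x, continuity_pt g1 x.
Hypothesis Hpc : forall x, continuity_pt p x.
Hypothesis Hp : forall x, 0 < p x.
Hypothesis HT0 : forall x, 0 <= x -> 0 <= T x.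
Hypothesis Hh0 : h 0 = 0.

(* int_0^b h^2 p <= 4 int_0^b g1^2 T^2 / p: integrate by parts
   int h^2 p = [- h^2 T] + int 2 h h' T and absorb with am_gm_weighted. *)
Lemma hardy_L2_right (Q2 Q4 : R -> R) :
  (forall x, derivable_pt_lim Q2 x (h x * h x * p x)) ->
  (forall x, derivable_pt_lim Q4 x (g1 x * g1 x * (T x * T x / p x))) ->
  forall b, 0 <= b -> Q2 b - Q2 0 <= 4 * (Q4 b - Q4 0).
Proof.
  intros HQ2 HQ4 b Hb.
  assert (Hhc : forall x, continuity_pt h x) by (apply (continuity_of_derivable h g1); auto).
  assert (HTc : forall x, continuity_pt T x)
    by (apply (continuity_of_derivable T (fun x => - p x)); auto).
  destruct (primitive_exists (fun x => 2 * h x * g1 x * T x)) as [Q3 HQ3]; [intro x; cont|].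
  assert (Hparts : Q2 0 + h 0 * h 0 * T 0 - Q3 0 = Q2 b + h b * h b * T b - Q3 b).
  { apply (const_of_deriv0 (fun x => Q2 x + h x * h x * T x - Q3 x)). intro x.
    replace 0 with (h x * h x * p x + ((g1 x * h x + h x * g1 x) * T x + h x * h x * - p x)
                    - 2 * h x * g1 x * T x) by ring.
    apply derivable_pt_lim_minus; auto. apply derivable_pt_lim_plus; auto.
    apply (derivable_pt_lim_mult (fun x => h x * h x) T); auto.
    apply (derivable_pt_lim_mult h h); auto. }
  rewrite Hh0 in Hparts.
  assert (Habsorb : Q2 0 + 4 * Q4 0 - 2 * Q3 0 <= Q2 b + 4 * Q4 b - 2 * Q3 b).
  { apply (le_of_deriv_nonneg (fun x => Q2 x + 4 * Q4 x - 2 * Q3 x)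
       (fun x => h x * h x * p x + 4 * (g1 x * g1 x * (T x * T x / p x))
                 - 2 * (2 * h x * g1 x * T x)) 0 b Hb).
    - intros c _. apply derivable_pt_lim_minus; [apply derivable_pt_lim_plus|]; auto;
        apply derivable_pt_lim_scal; auto.
    - intros c _. pose proof (am_gm_weighted (h c) (g1 c) (T c) (p c) (Hp c)). lra. }
  assert (0 <= h b * h b * T b) by (apply Rmult_le_pos; [apply Rle_0_sqr|auto]). lra.
Qed.

(* int_0^b |h| p <= int_0^b |g1| T: bound |h| by H = int_0 |g1| and
   integrate by parts int H p = [- H T] + int |g1| T. *)
Lemma hardy_L1_right (Q5 Q7 : R -> R) :
  (forall x, derivable_pt_lim Q5 x (Rabs (h x) * p x)) ->
  (forall x, derivable_pt_lim Q7 x (Rabs (g1 x) * T x)) ->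
  forall b, 0 <= b -> Q5 b - Q5 0 <= Q7 b - Q7 0.
Proof.
  intros HQ5 HQ7 b Hb.
  assert (HTc : forall x, continuity_pt T x)
    by (apply (continuity_of_derivable T (fun x => - p x)); auto).
  destruct (primitive_exists (fun x => Rabs (g1 x))) as [A HA]; [intro; cont|].
  set (H := fun x => A x - A 0).
  assert (HH : forall x, derivable_pt_lim H x (Rabs (g1 x))).
  { intro x. replace (Rabs (g1 x)) with (Rabs (g1 x) - 0) by ring.
    apply derivable_pt_lim_minus; auto. apply derivable_pt_lim_const. }
  assert (Hbnd : forall x, 0 <= x -> Rabs (h x) <= H x).
  { intros x Hx. pose proof (abs_increment_le h g1 A Hh HA 0 x Hx).
    rewrite Hh0, Rminus_0_r in H0. exact H0. }
  assert (HHc : forall x, continuity_pt H x)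
    by (apply (continuity_of_derivable H (fun x => Rabs (g1 x))); auto).
  destruct (primitive_exists (fun x => H x * p x)) as [Q6 HQ6]; [intro; cont|].
  assert (Hparts : Q6 0 + H 0 * T 0 - Q7 0 = Q6 b + H b * T b - Q7 b).
  { apply (const_of_deriv0 (fun x => Q6 x + H x * T x - Q7 x)). intro x.
    replace 0 with (H x * p x + (Rabs (g1 x) * T x + H x * - p x) - Rabs (g1 x) * T x) by ring.
    apply derivable_pt_lim_minus; auto. apply derivable_pt_lim_plus; auto.
    apply (derivable_pt_lim_mult H T); auto. }
  assert (Hcmp : Q6 0 - Q5 0 <= Q6 b - Q5 b).
  { apply (le_of_deriv_nonneg (fun x => Q6 x - Q5 x) (fun x => H x * p x - Rabs (h x) * p x) 0 b Hb).
    - intros; apply derivable_pt_lim_minus; auto.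
    - intros c Hc. specialize (Hbnd c ltac:(lra)). specialize (Hp c). nra. }
  replace (H 0) with 0 in Hparts by (unfold H; ring).
  assert (0 <= H b * T b).
  { apply Rmult_le_pos; auto. specialize (Hbnd b Hb). pose proof (Rabs_pos (h b)). lra. }
  lra.
Qed.

End HalfLine.

(* The same inequalities on (-oo, 0], where U' = p and U >= 0 is the mass of
   (-oo, x]; they follow from the right versions under x |-> -x. *)
Section HalfLineLeft.

Variables (h g1 p U : R -> R).
Hypothesis Hh : forall x, derivable_pt_lim h x (g1 x).
Hypothesis HU : forall x, derivable_pt_lim U x (p x).
Hypothesis Hg1c : forall x, continuity_pt g1 x.
Hypothesis Hpc : forall x, continuity_pt p x.
Hypothesis Hp : forall x, 0 < p x.
Hypothesis HU0 : forall x, x <= 0 -> 0 <= U x.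
Hypothesis Hh0 : h 0 = 0.

Let Hh' x : derivable_pt_lim (fun y => h (- y)) x (- g1 (- x)).
Proof. apply derivable_pt_lim_reflect, Hh. Qed.
Let HT' x : derivable_pt_lim (fun y => U (- y)) x (- p (- x)).
Proof. apply derivable_pt_lim_reflect, HU. Qed.
Let Hg1c' x : continuity_pt (fun y => - g1 (- y)) x.
Proof. apply copp, continuity_pt_reflect, Hg1c. Qed.
Let Hpc' x : continuity_pt (fun y => p (- y)) x.
Proof. apply continuity_pt_reflect, Hpc. Qed.
Let HT0' x : 0 <= x -> 0 <= U (- x).
Proof. intros; apply HU0; lra. Qed.
Let Hh0' : h (- 0) = 0.
Proof. now rewrite Ropp_0. Qed.


Lemma hardy_L2_left (Q2 Q4 : R -> R) :
  (forall x, derivable_pt_lim Q2 x (h x * h x * p x)) ->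
  (forall x, derivable_pt_lim Q4 x (g1 x * g1 x * (U x * U x / p x))) ->
  forall a, a <= 0 -> Q2 0 - Q2 a <= 4 * (Q4 0 - Q4 a).
Proof.
  intros HQ2 HQ4 a Ha.
  assert (HQ2' : forall x, derivable_pt_lim (fun y => - Q2 (- y)) x
                   (h (- x) * h (- x) * p (- x))) by (intros; now apply derivable_pt_lim_reflect_opp).
  assert (HQ4' : forall x, derivable_pt_lim (fun y => - Q4 (- y)) x
                   (- g1 (- x) * - g1 (- x) * (U (- x) * U (- x) / p (- x)))).
  { intros x. replace (- g1 (- x) * - g1 (- x)) with (g1 (- x) * g1 (- x)) by ring.
    now apply derivable_pt_lim_reflect_opp. }
  pose proof (hardy_L2_right _ _ _ _ Hh' HT' Hg1c' (fun x => Hp (- x)) HT0' Hh0'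
    _ _ HQ2' HQ4' (- a) ltac:(lra)) as H.
  cbv beta in H. rewrite Ropp_involutive, Ropp_0 in H. lra.
Qed.

Lemma hardy_L1_left (Q5 Q7 : R -> R) :
  (forall x, derivable_pt_lim Q5 x (Rabs (h x) * p x)) ->
  (forall x, derivable_pt_lim Q7 x (Rabs (g1 x) * U x)) ->
  forall a, a <= 0 -> Q5 0 - Q5 a <= Q7 0 - Q7 a.
Proof.
  intros HQ5 HQ7 a Ha.
  assert (HQ5' : forall x, derivable_pt_lim (fun y => - Q5 (- y)) x
                   (Rabs (h (- x)) * p (- x))) by (intros; now apply derivable_pt_lim_reflect_opp).
  assert (HQ7' : forall x, derivable_pt_lim (fun y => - Q7 (- y)) x
                   (Rabs (- g1 (- x)) * U (- x))).
  { intros x. rewrite Rabs_Ropp. now apply derivable_pt_lim_reflect_opp. }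
  pose proof (hardy_L1_right _ _ _ _ Hh' HT' Hg1c' Hpc' (fun x => Hp (- x)) HT0' Hh0'
    _ _ HQ5' HQ7' (- a) ltac:(lra)) as H.
  cbv beta in H. rewrite Ropp_involutive, Ropp_0 in H. lra.
Qed.

End HalfLineLeft.

Lemma tail_weight_nonneg S w x : 0 <= w -> 0 <= tail_weight S w x.
Proof.
  intros H. unfold tail_weight. destruct (Rlt_dec S (Rabs x)); [|lra].
  destruct (Req_dec w 0) as [->|Hn]; [rewrite Rinv_0; lra|]. apply Rlt_le, Rinv_0_lt_compat. lra.
Qed.

Lemma weighted_density_nonneg S w e y x : 0 <= y -> 0 <= w -> 0 < e ->
  0 <= y * (1 + tail_weight S w x) * e.
Proof.
  intros Hy Hw He. pose proof (tail_weight_nonneg S w x Hw).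
  apply Rmult_le_pos; [apply Rmult_le_pos|]; lra.
Qed.

Lemma scale_sq_weight S (V1 : R -> R) K q p x : 0 <= q -> q <= K * p * scale S V1 x ->
  0 < p -> 0 < K -> (S < Rabs x -> V1 x <> 0) ->
  q * q / p <= K ^ 2 * (1 + tail_weight S (V1 x ^ 2) x) * p.
Proof.
  intros Hq Hqb Hp HK Hnz. unfold scale, tail_weight in *.
  destruct (Rlt_dec S (Rabs x)) as [Hs|Hs].
  - specialize (Hnz Hs). assert (Ha : 0 < Rabs (V1 x)) by (apply Rabs_pos_lt; auto).
    set (iv := / Rabs (V1 x)) in *.
    assert (Hiv : 0 < iv) by (apply Rinv_0_lt_compat; auto).
    assert (E : / V1 x ^ 2 = iv * iv).
    { unfold iv. rewrite <- Rinv_mult, <- Rabs_mult, Rabs_right; [f_equal; ring|].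
      apply Rle_ge, Rle_0_sqr. }
    rewrite E.
    assert (q * q <= (K * p * iv) * (K * p * iv)) by (apply Rmult_le_compat; auto).
    apply (Rmult_le_reg_r p); auto. unfold Rdiv. rewrite Rmult_assoc, Rinv_l by lra.
    assert (0 <= K ^ 2 * p * p) by (apply Rmult_le_pos; [apply Rmult_le_pos|]; try apply pow2_ge_0; lra).
    nra.
  - assert (q * q <= (K * p * 1) * (K * p * 1)) by (apply Rmult_le_compat; auto).
    apply (Rmult_le_reg_r p); auto. unfold Rdiv. rewrite Rmult_assoc, Rinv_l by lra. nra.
Qed.

Lemma scale_weight S (V1 : R -> R) K q p x : q <= K * p * scale S V1 x -> 0 < p -> 0 < K ->
  q <= K * (1 + tail_weight S (Rabs (V1 x)) x) * p.
Proof.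
  intros Hqb Hp HK. unfold scale, tail_weight in *.
  destruct (Rlt_dec S (Rabs x)); [|nra].
  assert (0 <= / Rabs (V1 x)).
  { destruct (Req_dec (Rabs (V1 x)) 0) as [E|E]; [rewrite E, Rinv_0; lra|].
    apply Rlt_le, Rinv_0_lt_compat. pose proof (Rabs_pos (V1 x)); lra. }
  nra.
Qed.

Section Moments.

Variables (V P : R -> R) (Lm Lp : R).
Hypothesis Hpc : forall x, continuity_pt (fun y => exp (- V y)) x.
Hypothesis HP : forall x, derivable_pt_lim P x (exp (- V x)).
Hypothesis HLm : lim_minf P Lm.
Hypothesis HLp : lim_pinf P Lp.
Hypothesis HPb : forall x, Lm <= P x <= Lp.
Hypothesis Hmass : Lp - Lm = 1.

(* A finite second moment about c gives a finite first moment about c,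
   since |g - c| <= ((g - c)^2 + 1) / 2. *)
Lemma first_of_second_moment (g Q2 Qh : R -> R) c M : (forall x, continuity_pt g x) ->
  (forall x, derivable_pt_lim Q2 x ((g x - c) * (g x - c) * exp (- V x))) ->
  (forall a b, a <= b -> Q2 b - Q2 a <= M) ->
  (forall x, derivable_pt_lim Qh x ((g x - c) * exp (- V x))) ->
  exists Lhm Lhp, lim_minf Qh Lhm /\ lim_pinf Qh Lhp.
Proof.
  intros Hgc HQ2 HQ2b HQh.
  set (p := fun x => exp (- V x)) in *. assert (Hpp : forall x, 0 < p x) by (intro; apply exp_pos).
  apply (dominated_limits (fun x => (g x - c) * p x)
           (fun x => / 2 * ((g x - c) * (g x - c) * p x + p x)) Qh
           (fun x => / 2 * (Q2 x + P x)) (/ 2 * (M + 1))); auto.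
  - intro x. apply derivable_pt_lim_scal, derivable_pt_lim_plus; auto.
  - intro x. rewrite Rabs_mult, (Rabs_right (p x)) by (apply Rle_ge, Rlt_le; auto).
    pose proof (Hpp x). pose proof (Rle_0_sqr (Rabs (g x - c) - 1)). unfold Rsqr in *.
    replace ((g x - c) * (g x - c)) with (Rabs (g x - c) * Rabs (g x - c))
      by (rewrite <- Rabs_mult; apply Rabs_right, Rle_ge, Rle_0_sqr). nra.
  - intros a b Hab. specialize (HQ2b a b Hab). destruct (HPb a), (HPb b). lra.
Qed.

(* If int (g - c)^2 dmu <= M, then g has a mean and a variance, and the
   variance Var(g) = int (g - c)^2 dmu - (int (g - c) dmu)^2 is at most M. *)
Lemma variance_of_second_moment (g Q2 : R -> R) c M : (forall x, continuity_pt g x) ->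
  (forall x, derivable_pt_lim Q2 x ((g x - c) * (g x - c) * exp (- V x))) ->
  (forall a b, a <= b -> Q2 b - Q2 a <= M) ->
  exists mean v, improper_int (fun x => g x * exp (- V x)) mean /\
    improper_int (fun x => (g x - mean) ^ 2 * exp (- V x)) v /\ v <= M.
Proof.
  intros Hgc HQ2 HQ2b.
  set (p := fun x => exp (- V x)) in *.
  destruct (monotone_limits Q2 M) as [L2m [L2p [H2m [H2p [_ HL2]]]]]; auto.
  { intros a b Hab. apply (le_of_deriv_nonneg Q2 (fun x => (g x - c) * (g x - c) * p x)); auto.
    intros y _. apply Rmult_le_pos; [apply Rle_0_sqr|apply Rlt_le, exp_pos]. }
  destruct (primitive_exists (fun x => (g x - c) * p x)) as [Qh HQh]; [intro; cont|].
  destruct (first_of_second_moment g Q2 Qh c M Hgc HQ2 HQ2b HQh) as [Lhm [Lhp [Hhm Hhp]]].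
  set (m1 := Lhp - Lhm).
  exists (m1 + c), (L2p - L2m - m1 ^ 2). split; [|split].
  - replace (m1 + c) with ((Lhp + c * Lp) - (Lhm + c * Lm))
      by (unfold m1; replace (c * Lp) with (c * Lm + c * (Lp - Lm)) by ring; rewrite Hmass; ring).
    apply (improper_of_primitive _ (fun x => Qh x + c * P x)).
    + intro x. cont.
    + intro x. replace (g x * exp (- V x)) with ((g x - c) * p x + c * p x) by (unfold p; ring).
      apply derivable_pt_lim_plus; auto. now apply derivable_pt_lim_scal.
    + now apply lim_minf_lin.
    + now apply lim_pinf_lin.
  - replace (L2p - L2m - m1 ^ 2)
      with ((L2p + (- 2 * m1) * Lhp + m1 ^ 2 * Lp) - (L2m + (- 2 * m1) * Lhm + m1 ^ 2 * Lm)).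
    2:{ replace (m1 ^ 2 * Lp) with (m1 ^ 2 * Lm + m1 ^ 2 * (Lp - Lm)) by ring.
        rewrite Hmass. unfold m1. ring. }
    apply (improper_of_primitive _ (fun x => Q2 x + (- 2 * m1) * Qh x + m1 ^ 2 * P x)).
    + intro x. cont.
    + intro x.
      replace ((g x - (m1 + c)) ^ 2 * exp (- V x))
        with ((g x - c) * (g x - c) * p x + (- 2 * m1) * ((g x - c) * p x) + m1 ^ 2 * p x)
        by (unfold p; ring).
      apply derivable_pt_lim_plus; [apply derivable_pt_lim_plus|]; auto; now apply derivable_pt_lim_scal.
    + apply (lim_minf_lin (fun x => Q2 x + (- 2 * m1) * Qh x) P); auto. now apply lim_minf_lin.
    + apply (lim_pinf_lin (fun x => Q2 x + (- 2 * m1) * Qh x) P); auto. now apply lim_pinf_lin.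
  - pose proof (pow2_ge_0 m1). lra.
Qed.

Section FirstMoment.

Variables (g Q5 : R -> R) (c L5m L5p : R).
Hypothesis Hgc : forall x, continuity_pt g x.
Hypothesis HQ5 : forall x, derivable_pt_lim Q5 x (Rabs (g x - c) * exp (- V x)).
Hypothesis H5m : lim_minf Q5 L5m.
Hypothesis H5p : lim_pinf Q5 L5p.

Let HQ5_mono : forall a b, a <= b -> Q5 a <= Q5 b.
Proof.
  intros a b Hab. apply (le_of_deriv_nonneg Q5 (fun x => Rabs (g x - c) * exp (- V x))); auto.
  intros y _. apply Rmult_le_pos; [apply Rabs_pos|apply Rlt_le, exp_pos].
Qed.

(* Markov's inequality: a closed set of mu-mass >= 1/2 on which |g - c| >= d
   forces d <= 2 int |g - c| dmu.  The indicator is replaced by the continuous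
   minorant phi = min(1, |g - c| / d). *)
Lemma markov_half (A : R -> Prop) d : 0 < d -> measure_closed_ge V A (1/2) ->
  (forall x, A x -> d <= Rabs (g x - c)) -> d <= 2 * (L5p - L5m).
Proof.
  intros Hd Hmeas HA.
  set (u := fun x => / d * Rabs (g x - c)).
  set (phi := fun x => (1 + u x - Rabs (1 - u x)) * / 2).
  assert (Hphic : forall x, continuity_pt phi x) by (intro; unfold phi, u; cont).
  assert (Hu0 : forall x, 0 <= u x)
    by (intro x; apply Rmult_le_pos; [apply Rlt_le, Rinv_0_lt_compat, Hd|apply Rabs_pos]).
  assert (Hphi : forall x, 0 <= phi x <= 1 /\ phi x <= u x).
  { intro x. specialize (Hu0 x). unfold phi. destruct (Rle_dec (u x) 1).
    - rewrite (Rabs_right (1 - u x)) by lra. lra.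
    - rewrite (Rabs_left (1 - u x)) by lra. lra. }
  assert (HA1 : forall x, A x -> phi x = 1).
  { intros x Ax. assert (1 <= u x).
    { unfold u. apply (Rmult_le_reg_l d); auto. rewrite <- Rmult_assoc, Rinv_r by lra.
      specialize (HA x Ax). lra. }
    unfold phi. rewrite (Rabs_left1 (1 - u x)) by lra. lra. }
  set (p := fun x => exp (- V x)) in *. assert (Hpp : forall x, 0 < p x) by (intro; apply exp_pos).
  destruct (primitive_exists (fun x => phi x * p x)) as [Qf HQf]; [intro; cont|].
  destruct (dominated_limits (fun x => phi x * p x) p Qf P 1) as [Lfm [Lfp [Hfm Hfp]]]; auto.
  { intro x. destruct (Hphi x) as [[? ?] _]. specialize (Hpp x). rewrite Rabs_right by nra. nra. }
  { intros a b _. destruct (HPb a), (HPb b). lra. }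
  pose proof (Hmeas phi Hphic (fun x => proj1 (Hphi x)) HA1 _
    (improper_of_primitive (fun x => phi x * p x) Qf Lfm Lfp ltac:(intro; cont) HQf Hfm Hfp)) as Hhalf.
  assert (Lfp - Lfm <= / d * L5p - / d * L5m).
  { replace (/ d * L5p - / d * L5m) with ((0 + / d * L5p) - (0 + / d * L5m)) by ring.
    apply (primitive_limits_le (fun x => phi x * p x) (fun x => 0 + / d * (Rabs (g x - c) * p x))
             Qf (fun x => 0 + / d * Q5 x)); auto.
    - intro x. apply derivable_pt_lim_plus; [apply derivable_pt_lim_const|].
      now apply derivable_pt_lim_scal.
    - intro x. destruct (Hphi x) as [_ ?]. specialize (Hpp x). unfold u in *. nra.
    - apply lim_minf_lin; auto. exact (lim_pinf_const 0).
    - apply lim_pinf_lin; auto. apply lim_pinf_const. }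
  assert (1 / 2 <= / d * (L5p - L5m)) by lra.
  apply (Rmult_le_compat_l d) in H0; [|lra].
  replace (d * (/ d * (L5p - L5m))) with (L5p - L5m) in H0 by (field; lra). lra.
Qed.

Lemma median_distance m : is_median V g m -> Rabs (c - m) <= 2 * (L5p - L5m).
Proof.
  intros [Hup Hdown].
  destruct (Rtotal_order c m) as [Hlt|[Heq|Hgt]].
  - rewrite Rabs_left by lra.
    apply (markov_half (fun x => m <= g x)); auto; [lra|].
    intros x Hx. rewrite Rabs_right by lra. lra.
  - rewrite Heq, Rminus_diag, Rabs_R0.
    destruct (nondecreasing_between_limits Q5 _ _ HQ5_mono H5m H5p 0). lra.
  - rewrite Rabs_right by lra.
    apply (markov_half (fun x => g x <= m)); auto; [lra|].
    intros x Hx. rewrite Rabs_left1 by lra. lra.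
Qed.

(* Hence int |g - m| dmu <= |c - m| + int |g - c| dmu <= 3 int |g - c| dmu. *)
Lemma deviation_from_median m L : is_median V g m -> L5p - L5m <= L ->
  exists a, improper_int (fun x => Rabs (g x - m) * exp (- V x)) a /\ a <= 3 * L.
Proof.
  intros Hmed HL. pose proof (median_distance m Hmed) as Hd.
  set (d := Rabs (c - m)) in *. set (p := fun x => exp (- V x)) in *.
  assert (Hpp : forall x, 0 < p x) by (intro; apply exp_pos).
  assert (Htri : forall x, Rabs (g x - m) * p x <= Rabs (g x - c) * p x + d * p x).
  { intro x. rewrite <- Rmult_plus_distr_r. apply Rmult_le_compat_r; [apply Rlt_le, Hpp|].
    replace (g x - m) with ((g x - c) + (c - m)) by ring. apply Rabs_triang. }
  assert (HQd : forall x, derivable_pt_lim (fun y => Q5 y + d * P y) x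
                            (Rabs (g x - c) * p x + d * p x)).
  { intro x. apply derivable_pt_lim_plus; auto. now apply derivable_pt_lim_scal. }
  destruct (primitive_exists (fun x => Rabs (g x - m) * p x)) as [Qa HQa]; [intro; cont|].
  destruct (dominated_limits (fun x => Rabs (g x - m) * p x) _ Qa _ (L5p - L5m + d) HQa HQd)
    as [Lam [Lap [Ham Hap]]].
  { intro x. rewrite Rabs_mult, Rabs_Rabsolu, (Rabs_right (p x)) by (apply Rle_ge, Rlt_le; auto).
    apply Htri. }
  { intros a b Hab. assert (0 <= d) by apply Rabs_pos.
    destruct (nondecreasing_between_limits Q5 _ _ HQ5_mono H5m H5p a).
    destruct (nondecreasing_between_limits Q5 _ _ HQ5_mono H5m H5p b).
    destruct (HPb a), (HPb b). nra. }
  exists (Lap - Lam). split.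
  - apply (improper_of_primitive _ Qa); auto. intro x. cont.
  - assert (Lap - Lam <= (L5p + d * Lp) - (L5m + d * Lm)).
    { apply (primitive_limits_le _ _ Qa _ _ _ _ _ HQa HQd Htri Ham Hap);
        [now apply lim_minf_lin|now apply lim_pinf_lin]. }
    replace ((L5p + d * Lp) - (L5m + d * Lm)) with (L5p - L5m + d * (Lp - Lm)) in H by ring.
    rewrite Hmass in H. lra.
Qed.

End FirstMoment.

End Moments.

Section WeightedHardy.

Variables (V V1 P : R -> R) (Lm Lp S K : R).
Hypothesis Hpc : forall x, continuity_pt (fun y => exp (- V y)) x.
Hypothesis HP : forall x, derivable_pt_lim P x (exp (- V x)).
Hypothesis HLm : lim_minf P Lm.
Hypothesis HLp : lim_pinf P Lp.
Hypothesis HPb : forall x, Lm <= P x <= Lp.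
Hypothesis Hmass : Lp - Lm = 1.
Hypothesis HK : 0 < K.
Hypothesis HV1nz : forall x, S < Rabs x -> V1 x <> 0.
Hypothesis HTR : forall x, 0 <= x -> Lp - P x <= K * exp (- V x) * scale S V1 x.
Hypothesis HTL : forall x, x <= 0 -> P x - Lm <= K * exp (- V x) * scale S V1 x.

Variables (g g1 : R -> R).
Hypothesis Hg : forall x, derivable_pt_lim g x (g1 x).
Hypothesis Hg1c : forall x, continuity_pt g1 x.

Let p x := exp (- V x).
Let h x := g x - g 0.
Let T x := Lp - P x.
Let U x := P x - Lm.

Let Hgc x : continuity_pt g x.
Proof. now apply (continuity_of_derivable g g1). Qed.
Let Hpp x : 0 < p x.
Proof. apply exp_pos. Qed.
Let Hh x : derivable_pt_lim h x (g1 x).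
Proof.
  unfold h. replace (g1 x) with (g1 x - 0) by ring.
  apply derivable_pt_lim_minus; [apply Hg|apply derivable_pt_lim_const].
Qed.
Let Hh0 : h 0 = 0.
Proof. unfold h; ring. Qed.
Let HT x : derivable_pt_lim T x (- p x).
Proof.
  unfold T. replace (- p x) with (0 - p x) by ring.
  apply derivable_pt_lim_minus; [apply derivable_pt_lim_const|apply HP].
Qed.
Let HU x : derivable_pt_lim U x (p x).
Proof.
  unfold U. replace (p x) with (p x - 0) by ring.
  apply derivable_pt_lim_minus; [apply HP|apply derivable_pt_lim_const].
Qed.
Let HT0 x : 0 <= T x.
Proof. unfold T; destruct (HPb x); lra. Qed.
Let HU0 x : 0 <= U x.
Proof. unfold U; destruct (HPb x); lra. Qed.
Let HTc x : continuity_pt T x.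
Proof. now apply (continuity_of_derivable T (fun x => - p x)). Qed.
Let HUc x : continuity_pt U x.
Proof. now apply (continuity_of_derivable U p). Qed.

Lemma second_moment_bound I :
  improper_int (fun x => g1 x ^ 2 * (1 + tail_weight S (V1 x ^ 2) x) * exp (- V x)) I ->
  forall Q2, (forall x, derivable_pt_lim Q2 x ((g x - g 0) * (g x - g 0) * exp (- V x))) ->
  forall a b, a <= b -> Q2 b - Q2 a <= 4 * K ^ 2 * I.
Proof.
  intros HI Q2 HQ2. pose proof HI as [prW _].
  set (W := fun x => g1 x ^ 2 * (1 + tail_weight S (V1 x ^ 2) x) * exp (- V x)) in *.
  assert (HWnn : forall x, 0 <= W x)
    by (intro; apply weighted_density_nonneg; [apply pow2_ge_0|apply pow2_ge_0|apply exp_pos]).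
  assert (HK2 : 0 < K ^ 2) by (apply pow_lt; auto).
  assert (Hcmp : forall t x, 0 <= t -> t <= K * p x * scale S V1 x ->
            g1 x * g1 x * (t * t / p x) <= K ^ 2 * W x).
  { intros t x Ht Htb. unfold W.
    replace (K ^ 2 * (g1 x ^ 2 * (1 + tail_weight S (V1 x ^ 2) x) * exp (- V x)))
      with (g1 x * g1 x * (K ^ 2 * (1 + tail_weight S (V1 x ^ 2) x) * p x)) by (unfold p; ring).
    apply Rmult_le_compat_l; [apply Rle_0_sqr|]. apply scale_sq_weight; auto. }
  assert (HcT : forall x, continuity_pt (fun y => g1 y * g1 y * (T y * T y / p y)) x).
  { intro x. apply cmul; [cont|]. apply cdiv; [cont|auto|]. pose proof (Hpp x); lra. }
  assert (HcU : forall x, continuity_pt (fun y => g1 y * g1 y * (U y * U y / p y)) x).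
  { intro x. apply cmul; [cont|]. apply cdiv; [cont|auto|]. pose proof (Hpp x); lra. }
  destruct (primitive_exists _ HcT) as [Q4R HQ4R].
  destruct (primitive_exists _ HcU) as [Q4L HQ4L].
  pose proof (hardy_L2_right h g1 p T Hh HT Hg1c Hpp (fun x _ => HT0 x) Hh0 Q2 Q4R HQ2 HQ4R) as ER.
  pose proof (hardy_L2_left h g1 p U Hh HU Hg1c Hpp (fun x _ => HU0 x) Hh0 Q2 Q4L HQ2 HQ4L) as EL.
  apply increments_across_zero.
  - intros a b Hab. apply (le_of_deriv_nonneg Q2 (fun x => h x * h x * p x)); auto.
    intros c _. apply Rmult_le_pos; [apply Rle_0_sqr|apply Rlt_le; auto].
  - intros a b Ha Hb.
    pose proof (increment_le_integral _ W Q4R (K ^ 2) 0 b (prW 0 b) HcT HQ4R HK2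
      (fun x Hx => Hcmp (T x) x (HT0 x) (HTR x (proj1 Hx))) Hb).
    pose proof (increment_le_integral _ W Q4L (K ^ 2) a 0 (prW a 0) HcU HQ4L HK2
      (fun x Hx => Hcmp (U x) x (HU0 x) (HTL x (proj2 Hx))) Ha).
    pose proof (ER b Hb). pose proof (EL a Ha).
    pose proof (RiemannInt_P26 (prW a 0) (prW 0 b) (prW a b)).
    pose proof (partial_le_improper W I HI HWnn a b (prW a b) ltac:(lra)).
    nra.
Qed.

Lemma first_moment_bound J :
  improper_int (fun x => Rabs (g1 x) * (1 + tail_weight S (Rabs (V1 x)) x) * exp (- V x)) J ->
  forall Q5, (forall x, derivable_pt_lim Q5 x (Rabs (g x - g 0) * exp (- V x))) ->
  forall a b, a <= b -> Q5 b - Q5 a <= K * J.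
Proof.
  intros HJ Q5 HQ5. pose proof HJ as [prW _].
  set (W := fun x => Rabs (g1 x) * (1 + tail_weight S (Rabs (V1 x)) x) * exp (- V x)) in *.
  assert (HWnn : forall x, 0 <= W x)
    by (intro; apply weighted_density_nonneg; [apply Rabs_pos|apply Rabs_pos|apply exp_pos]).
  assert (Hcmp : forall t x, t <= K * p x * scale S V1 x -> Rabs (g1 x) * t <= K * W x).
  { intros t x Htb. unfold W.
    replace (K * (Rabs (g1 x) * (1 + tail_weight S (Rabs (V1 x)) x) * exp (- V x)))
      with (Rabs (g1 x) * (K * (1 + tail_weight S (Rabs (V1 x)) x) * p x)) by (unfold p; ring).
    apply Rmult_le_compat_l; [apply Rabs_pos|]. apply scale_weight; auto. }
  destruct (primitive_exists (fun x => Rabs (g1 x) * T x)) as [Q7R HQ7R]; [intro; cont|].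
  destruct (primitive_exists (fun x => Rabs (g1 x) * U x)) as [Q7L HQ7L]; [intro; cont|].
  pose proof (hardy_L1_right h g1 p T Hh HT Hg1c Hpc Hpp (fun x _ => HT0 x) Hh0 Q5 Q7R HQ5 HQ7R) as ER.
  pose proof (hardy_L1_left h g1 p U Hh HU Hg1c Hpc Hpp (fun x _ => HU0 x) Hh0 Q5 Q7L HQ5 HQ7L) as EL.
  apply increments_across_zero.
  - intros a b Hab. apply (le_of_deriv_nonneg Q5 (fun x => Rabs (h x) * p x)); auto.
    intros c _. apply Rmult_le_pos; [apply Rabs_pos|apply Rlt_le; auto].
  - intros a b Ha Hb.
    pose proof (increment_le_integral (fun x => Rabs (g1 x) * T x) W Q7R K 0 b (prW 0 b)
      ltac:(intro; cont) HQ7R HK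
      (fun x Hx => Hcmp (T x) x (HTR x (proj1 Hx))) Hb).
    pose proof (increment_le_integral (fun x => Rabs (g1 x) * U x) W Q7L K a 0 (prW a 0)
      ltac:(intro; cont) HQ7L HK
      (fun x Hx => Hcmp (U x) x (HTL x (proj2 Hx))) Ha).
    pose proof (ER b Hb). pose proof (EL a Ha).
    pose proof (RiemannInt_P26 (prW a 0) (prW 0 b) (prW a b)).
    pose proof (partial_le_improper W J HJ HWnn a b (prW a b) ltac:(lra)).
    nra.
Qed.

Lemma weighted_variance_bound I :
  improper_int (fun x => g1 x ^ 2 * (1 + tail_weight S (V1 x ^ 2) x) * exp (- V x)) I ->
  exists mean v, improper_int (fun x => g x * exp (- V x)) mean /\
    improper_int (fun x => (g x - mean) ^ 2 * exp (- V x)) v /\ v <= 4 * K ^ 2 * I.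
Proof.
  intros HI.
  destruct (primitive_exists (fun x => (g x - g 0) * (g x - g 0) * exp (- V x))) as [Q2 HQ2];
    [intro; cont|].
  exact (variance_of_second_moment V P Lm Lp Hpc HP HLm HLp HPb Hmass g Q2 (g 0) _ Hgc HQ2
           (second_moment_bound I HI Q2 HQ2)).
Qed.

Lemma weighted_median_bound J m :
  improper_int (fun x => Rabs (g1 x) * (1 + tail_weight S (Rabs (V1 x)) x) * exp (- V x)) J ->
  is_median V g m ->
  exists a, improper_int (fun x => Rabs (g x - m) * exp (- V x)) a /\ a <= 3 * (K * J).
Proof.
  intros HJ Hmed.
  destruct (primitive_exists (fun x => Rabs (g x - g 0) * exp (- V x))) as [Q5 HQ5]; [intro; cont|].
  destruct (monotone_limits Q5 (K * J)) as [L5m [L5p [H5m [H5p [_ HL5]]]]].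
  { intros a b Hab. apply (le_of_deriv_nonneg Q5 (fun x => Rabs (g x - g 0) * exp (- V x))); auto.
    intros c _. apply Rmult_le_pos; [apply Rabs_pos|apply Rlt_le, exp_pos]. }
  { exact (first_moment_bound J HJ Q5 HQ5). }
  exact (deviation_from_median V P Lm Lp Hpc HP HLm HLp HPb Hmass g Q5 (g 0) L5m L5p
           Hgc HQ5 H5m H5p m (K * J) Hmed HL5).
Qed.

End WeightedHardy.

Lemma smooth_derivative_continuous (g g1 : R -> R) : smooth g ->
  (forall x, derivable_pt_lim g x (g1 x)) -> forall x, continuity_pt g1 x.
Proof.
  intros [D [HD0 HD]] Hg.
  assert (E : D O = g) by (apply functional_extensionality; auto).
  assert (E1 : D 1%nat = g1).
  { apply functional_extensionality; intro x. pose proof (HD O x) as H. rewrite E in H.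
    apply (uniqueness_limite g x); auto. }
  rewrite <- E1. apply (continuity_of_derivable (D 1%nat) (D 2%nat)). auto.
Qed.

Theorem mainTheorem7
  (V V1 V2 : R -> R) (R0 r : R)
  (hVsm : smooth V)
  (hV1 : forall x, derivable_pt_lim V x (V1 x))
  (hV2 : forall x, derivable_pt_lim V1 x (V2 x))
  (hprob : improper_int (fun x => exp (- V x)) 1)
  (heven : forall x, V (- x) = V x)
  (hR0 : 0 < R0)
  (hconc : forall x y t, R0 < x -> R0 < y -> 0 <= t <= 1 ->
      t * V x + (1 - t) * V y <= V (t * x + (1 - t) * y))
  (hr : - / 2 < r)
  (hlim : forall eps, 0 < eps -> exists M, forall x, M < x ->
      Rabs (V2 x / (V1 x) ^ 2 - r) < eps) :
  exists S C, R0 < S /\ 0 < C /\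
    forall g g1 : R -> R, smooth g ->
      (forall x, derivable_pt_lim g x (g1 x)) ->
      (forall I, improper_int
           (fun x => (g1 x) ^ 2 * (1 + tail_weight S ((V1 x) ^ 2) x) * exp (- V x)) I ->
         exists mean v,
           improper_int (fun x => g x * exp (- V x)) mean /\
           improper_int (fun x => (g x - mean) ^ 2 * exp (- V x)) v /\
           v <= C * I) /\
      (forall J m, improper_int
           (fun x => Rabs (g1 x) * (1 + tail_weight S (Rabs (V1 x)) x) * exp (- V x)) J ->
         is_median V g m ->
         exists a,
           improper_int (fun x => Rabs (g x - m) * exp (- V x)) a /\
           a <= C * J).
Proof.
  destruct (distribution_function V V1 hV1 hprob) as [P [Lm [Lp [HP [HLm [HLp [HPb Hmass]]]]]]].
  destruct (tail_estimate V V1 V2 R0 r hV1 hV2 heven hR0 hconc hr hlim P Lm Lp HP HLm HLp HPb Hmass)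
    as [S [K [HS [HK [HV1nz [HTR HTL]]]]]].
  assert (Hpc : forall x, continuity_pt (fun y => exp (- V y)) x).
  { apply (continuity_of_derivable _ (fun x => - V1 x * exp (- V x))).
    intros x; now apply derivable_pt_lim_exp_opp. }
  pose proof (pow_lt K 2 HK) as HK2.
  exists S, (4 * K ^ 2 + 3 * K). split; [auto|]. split; [lra|].
  intros g g1 Hgsm Hg.
  pose proof (smooth_derivative_continuous g g1 Hgsm Hg) as Hg1c.
  split.
  - intros I HI.
    destruct (weighted_variance_bound V V1 P Lm Lp S K Hpc HP HLm HLp HPb Hmass HK HV1nz HTR HTL
                g g1 Hg Hg1c I HI) as [mean [v [Hmean [Hv Hvb]]]].
    exists mean, v. split; [auto|]. split; [auto|].
    assert (0 <= I) by (apply (improper_nonneg _ I HI); intro;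
      apply weighted_density_nonneg; [apply pow2_ge_0|apply pow2_ge_0|apply exp_pos]).
    nra.
  - intros J m HJ Hmed.
    destruct (weighted_median_bound V V1 P Lm Lp S K Hpc HP HLm HLp HPb Hmass HK HTR HTL
                g g1 Hg Hg1c J m HJ Hmed) as [a [Ha Hab]].
    exists a. split; [auto|].
    assert (0 <= J) by (apply (improper_nonneg _ J HJ); intro;
      apply weighted_density_nonneg; [apply Rabs_pos|apply Rabs_pos|apply exp_pos]).
    nra.
Qed.
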